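(* Let $a_1,b_1,a_2,b_2$ be integers with $a_1a_2(a_1b_2-a_2b_1)\neq 0$, and put $D=a_1b_2-a_2b_1$. (i) Suppose $m_1,m_2,k_1,k_2,l$ are positive integers with $k_1\neq k_2$ such that $$m_1=\frac{k_2D}{a_2(k_2-k_1)},\qquad m_2=\frac{k_1D}{a_1(k_2-k_1)},\qquad k_1\sigma(m_1)=k_2\sigma(m_2),$$ and such that $q_i=k_il-1$ is a prime not dividing $m_i$ for $i=1,2$. If $n=\frac{m_1q_1-b_1}{a_1}$, then $a_1n+b_1=m_1q_1$, $a_2n+b_2=m_2q_2$, and $\sigma(a_1n+b_1)=\sigma(a_2n+b_2)$. (ii) Suppose $m_1,m_2,k_1,k_2,l$ are positive integers with $k_1\neq k_2$ such that $$m_1=\frac{k_2D}{a_2(k_1-k_2)},\qquad m_2=\frac{k_1D}{a_1(k_1-k_2)},\qquad k_1\varphi(m_1)=k_2\varphi(m_2),$$ and such that $q_i=k_il+1$ is a prime not dividing $m_i$ for $i=1,2$. If $n=\frac{m_1q_1-b_1}{a_1}$, then $a_1n+b_1=m_1q_1$, $a_2n+b_2=m_2q_2$, and $\varphi(a_1n+b_1)=\varphi(a_2n+b_2)$. (iii) Moreover, if $a_1=a_2$ and the hypotheses of (ii) hold (the three displayed relations of (ii)), then $m_2=m_1+b_2-b_1$ and $m_1,m_2$ have the same set of prime factors.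
   Context: $\sigma(m)$ denotes the sum of the positive divisors of $m$ and $\varphi$ is Euler's totient function. *)

From mathcomp Require Import all_boot all_order all_algebra.
Set Implicit Arguments. Unset Strict Implicit. Unset Printing Implicit Defensive.

(* sum of the positive divisors of m; [divisors m] is the sorted list of
   divisors of m > 0 (and [::] for m = 0). *)
Definition sigma (m : nat) : nat := \sum_(d <- divisors m) d.

(* For (i) and (ii) the choice of m1, m2 makes a1 n + b1 = m1 q1 and
   a2 n + b2 = m2 q2 a polynomial identity, and since q_i is a prime not
   dividing m_i, sigma (m_i q_i) = sigma m_i * k_i l (resp. phi (m_i q_i) =
   phi m_i * k_i l), so k1 sigma m1 = k2 sigma m2 gives the equality.
   For (iii), a1 = a2 turns the two formulas into m2 - m1 = b2 - b1 and
   k1 m1 = k2 m2, hence phi m1 / m1 = phi m2 / m2.  If P is the largest prime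
   factor of m1 m2, then P does not divide phi of the P-free parts, so the
   P-adic valuation of phi m is (logn P m).-1; comparing valuations forces P
   to divide both m1 and m2, and removing the P-parts preserves the equation,
   which gives primes m1 = primes m2 by induction. *)

From mathcomp Require Import all_boot all_order all_algebra.
From mathcomp Require Import ring zify.
Import GRing.Theory Num.Theory.

Set Implicit Arguments.
Unset Strict Implicit.
Unset Printing Implicit Defensive.

Lemma divisors_mul_prime m p : 0 < m -> prime p -> ~~ (p %| m) ->
  perm_eq (divisors (m * p)) (divisors m ++ map (muln p) (divisors m)).
Proof.
move=> m_gt0 p_pr p_ndvd_m; have p_gt0 := prime_gt0 p_pr.
have mp_gt0 : 0 < m * p by rewrite muln_gt0 m_gt0.
apply: uniq_perm; first exact: divisors_uniq.
  rewrite cat_uniq divisors_uniq map_inj_uniq ?divisors_uniq; last first.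
    by move=> x y /eqP; rewrite eqn_pmul2l // => /eqP.
  rewrite andbT; apply/hasPn => _ /mapP[d _ ->]; rewrite /= -dvdn_divisors //.
  by apply: contra p_ndvd_m; apply: dvdn_trans; apply: dvdn_mulr.
move=> d; rewrite mem_cat -!dvdn_divisors //; apply/idP/orP => [d_mp | ].
  have [/dvdnP[d' def_d] | p_ndvd_d] := boolP (p %| d).
    right; apply/mapP; exists d'; last by rewrite def_d mulnC.
    by rewrite -dvdn_divisors // -(dvdn_pmul2r p_gt0) -def_d.
  by left; rewrite -(Gauss_dvdl _ (_ : coprime d p)) // coprime_sym prime_coprime.
case=> [/dvdn_mulr // | /mapP[d' d'_m ->]].
by rewrite mulnC dvdn_pmul2r // dvdn_divisors.
Qed.

Lemma sigma_mul_prime m p : 0 < m -> prime p -> ~~ (p %| m) ->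
  sigma (m * p) = sigma m * p.+1.
Proof.
move=> m_gt0 p_pr p_ndvd_m.
rewrite /sigma (perm_big _ (divisors_mul_prime m_gt0 p_pr p_ndvd_m)) big_cat /=.
by rewrite big_map -big_distrr /= mulnS mulnC addnC.
Qed.

Lemma totient_mul_prime m p : prime p -> ~~ (p %| m) ->
  totient (m * p) = totient m * p.-1.
Proof.
move=> p_pr p_ndvd_m.
by rewrite totient_coprime ?(totient_prime p_pr) // coprime_sym prime_coprime.
Qed.

Lemma prime_ndvd_totient P n : prime P -> 0 < n -> {in primes n, forall p, p < P} ->
  ~~ (P %| totient n).
Proof.
move=> P_pr n_gt0 lt_P; rewrite totientE // Euclid_dvd_prod // big_seq.
elim/big_rec: _ => // p b p_n P_ndvd_b.
rewrite negb_or P_ndvd_b andbT Euclid_dvdM // Euclid_dvdX //.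
have p_pr : prime p by move: p_n; rewrite mem_primes => /andP[].
have p_gt1 := prime_gt1 p_pr; have p_lt_P := lt_P p p_n.
by rewrite !gtnNdvd //; lia.
Qed.

Lemma logn_totient_pfactor P e : prime P -> logn P (totient (P ^ e)) = e.-1.
Proof.
case: e => [|e] P_pr; first by rewrite expn0 logn1.
rewrite totient_pfactor // logn_Gauss ?pfactorK // prime_coprime // gtnNdvd //.
  by rewrite -subn1 subn_gt0 prime_gt1.
by rewrite prednK ?prime_gt0.
Qed.

Lemma logn_totient P m : prime P -> 0 < m -> {in primes m, forall p, p <= P} ->
  logn P (totient m) = (logn P m).-1.
Proof.
move=> P_pr m_gt0 le_P; have [m' P_co_m' def_m] := pfactor_coprime P_pr m_gt0.
have m'_gt0 : 0 < m' by move: m_gt0; rewrite def_m muln_gt0 => /andP[].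
rewrite [in totient _]def_m totient_coprime ?coprimeXr 1?coprime_sym //.
rewrite logn_Gauss ?logn_totient_pfactor // prime_coprime //.
apply: prime_ndvd_totient => // p p_m'.
move: (p_m'); rewrite mem_primes => /and3P[p_pr _ p_dvd_m'].
rewrite ltn_neqAle le_P ?andbT; last by rewrite mem_primes p_pr m_gt0 def_m dvdn_mulr.
by apply: contraTneq P_co_m' => <-; rewrite prime_coprime ?negbK.
Qed.

Lemma mul_totient_pfactorC P e f : prime P -> 0 < e -> 0 < f ->
  P ^ f * totient (P ^ e) = P ^ e * totient (P ^ f).
Proof.
move=> P_pr e_gt0 f_gt0; rewrite !totient_pfactor // mulnCA [RHS]mulnCA -!expnD.
by congr (_ * P ^ _); lia.
Qed.

Lemma mem_primes_mul_pfactor m P e p : prime P -> 0 < m -> 0 < e ->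
  (p \in primes (m * P ^ e)) = (p == P) || (p \in primes m).
Proof.
move=> P_pr m_gt0 e_gt0.
have Pe_gt0 : 0 < P ^ e by rewrite expn_gt0 prime_gt0.
by rewrite primesM // primesX // (primes_prime P_pr) mem_seq1 orbC.
Qed.

Lemma totient_ratio_logn_gt0 P m1 m2 : prime P -> 0 < m1 -> 0 < m2 ->
  {in primes m1, forall p, p <= P} -> {in primes m2, forall p, p <= P} ->
  P %| m1 * m2 -> m2 * totient m1 = m1 * totient m2 ->
  0 < logn P m1 /\ 0 < logn P m2.
Proof.
move=> P_pr m1_gt0 m2_gt0 le_P1 le_P2 P_dvd E.
have logn_gt0_m : 0 < logn P m1 + logn P m2.
  by rewrite -lognM // logn_gt0 mem_primes P_pr muln_gt0 m1_gt0 m2_gt0.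
have := congr1 (logn P) E; rewrite !lognM ?totient_gt0 // !logn_totient //.
by lia.
Qed.

Lemma totient_ratio_cancel_pfactor P e f m1 m2 : prime P -> 0 < e -> 0 < f ->
  coprime P m1 -> coprime P m2 ->
  (m2 * P ^ f) * totient (m1 * P ^ e) = (m1 * P ^ e) * totient (m2 * P ^ f) ->
  m2 * totient m1 = m1 * totient m2.
Proof.
move=> P_pr e_gt0 f_gt0 P_co_m1 P_co_m2.
rewrite !totient_coprime ?coprimeXr 1?coprime_sym // [LHS]mulnACA [RHS]mulnACA.
rewrite -(mul_totient_pfactorC P_pr e_gt0 f_gt0) => /eqP.
by rewrite eqn_pmul2r ?muln_gt0 ?totient_gt0 ?expn_gt0 ?prime_gt0 // => /eqP.
Qed.

Lemma totient_ratio_eq_primes m1 m2 : 0 < m1 -> 0 < m2 ->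
  m2 * totient m1 = m1 * totient m2 -> primes m1 = primes m2.
Proof.
move=> + + E; rewrite -eq_primes; have [N] := ubnP (m1 * m2).
elim: N m1 m2 E => // N IH m1 m2 E lt_m_N m1_gt0 m2_gt0.
have [m_le1 | m_gt1] := leqP (m1 * m2) 1.
  suff /andP[/eqP-> /eqP->] : (m1 == 1) && (m2 == 1) by [].
  by rewrite -muln_eq1 eqn_leq m_le1 muln_gt0 m1_gt0.
set P := max_pdiv (m1 * m2); have P_pr : prime P := max_pdiv_prime m_gt1.
have le_P m : m %| m1 * m2 -> {in primes m, forall p, p <= P}.
  move=> m_dvd p; rewrite !mem_primes => /and3P[p_pr m_gt0 p_dvd].
  apply: max_pdiv_max; rewrite mem_primes p_pr muln_gt0 m1_gt0 m2_gt0.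
  exact: dvdn_trans m_dvd.
have [e_gt0 f_gt0] := totient_ratio_logn_gt0 P_pr m1_gt0 m2_gt0
  (le_P _ (dvdn_mulr _ (dvdnn _))) (le_P _ (dvdn_mull _ (dvdnn _))) (max_pdiv_dvd _) E.
have [m1' P_co_m1' def_m1] := pfactor_coprime P_pr m1_gt0.
have [m2' P_co_m2' def_m2] := pfactor_coprime P_pr m2_gt0.
have m1'_gt0 : 0 < m1' by move: m1_gt0; rewrite def_m1 muln_gt0 => /andP[].
have m2'_gt0 : 0 < m2' by move: m2_gt0; rewrite def_m2 muln_gt0 => /andP[].
rewrite def_m1 def_m2 in E lt_m_N.
have E' := totient_ratio_cancel_pfactor P_pr e_gt0 f_gt0 P_co_m1' P_co_m2' E.
have lt_m'_N : m1' * m2' < N.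
  rewrite mulnACA -expnD ltnS in lt_m_N; apply: leq_trans lt_m_N.
  rewrite ltn_Pmulr ?muln_gt0 ?m1'_gt0 // -(expn0 P) ltn_exp2l ?prime_gt1 //.
  by rewrite addn_gt0 e_gt0.
move=> p; rewrite def_m1 def_m2 !mem_primes_mul_pfactor //.
by rewrite (IH m1' m2' E' lt_m'_N m1'_gt0 m2'_gt0).
Qed.

Lemma scaled_totient_eq_primes k1 k2 m1 m2 :
  0 < k1 -> 0 < k2 -> 0 < m1 -> 0 < m2 ->
  k1 * m1 = k2 * m2 -> k1 * totient m1 = k2 * totient m2 -> primes m1 = primes m2.
Proof.
move=> k1_gt0 k2_gt0 m1_gt0 m2_gt0 Em Et; apply: totient_ratio_eq_primes => //.
have k_gt0 : 0 < k1 * k2 by rewrite muln_gt0 k1_gt0.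
apply/eqP; rewrite -(eqn_pmul2l k_gt0); apply/eqP.
transitivity ((k2 * m2) * (k1 * totient m1)); first ring.
by rewrite -Em Et; ring.
Qed.

Lemma sigma_mul_pred_prime_eq m1 m2 k1 k2 l :
  0 < m1 -> 0 < m2 -> 0 < k1 * l -> 0 < k2 * l ->
  prime (k1 * l).-1 -> ~~ ((k1 * l).-1 %| m1) ->
  prime (k2 * l).-1 -> ~~ ((k2 * l).-1 %| m2) ->
  k1 * sigma m1 = k2 * sigma m2 ->
  sigma (m1 * (k1 * l).-1) = sigma (m2 * (k2 * l).-1).
Proof.
move=> m1_gt0 m2_gt0 kl1_gt0 kl2_gt0 q1_pr q1_ndvd q2_pr q2_ndvd E.
by rewrite !sigma_mul_prime // !prednK // !mulnA !(mulnC (sigma _)) E.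
Qed.

Lemma totient_mul_succ_prime_eq m1 m2 k1 k2 l :
  prime (k1 * l).+1 -> ~~ ((k1 * l).+1 %| m1) ->
  prime (k2 * l).+1 -> ~~ ((k2 * l).+1 %| m2) ->
  k1 * totient m1 = k2 * totient m2 ->
  totient (m1 * (k1 * l).+1) = totient (m2 * (k2 * l).+1).
Proof.
move=> q1_pr q1_ndvd q2_pr q2_ndvd E.
by rewrite !totient_mul_prime // !mulnA !(mulnC (totient _)) E.
Qed.

Local Open Scope ring_scope.

(* Parts (i) and (ii) are the cases e = -1 and e = 1. *)
Lemma affine_forms_at_products (F : fieldType) (a1 b1 a2 b2 k1 k2 l e m1 m2 : F) :
  a1 != 0 -> a2 != 0 -> e != 0 -> k1 != k2 ->
  m1 = k2 * (a1 * b2 - a2 * b1) / (a2 * (e * (k1 - k2))) ->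
  m2 = k1 * (a1 * b2 - a2 * b1) / (a1 * (e * (k1 - k2))) ->
  a2 * ((m1 * (k1 * l + e) - b1) / a1) + b2 = m2 * (k2 * l + e).
Proof.
move=> a1_neq0 a2_neq0 e_neq0 k_neq -> ->; field.
by rewrite subr_eq0 k_neq e_neq0 a1_neq0 a2_neq0.
Qed.

Lemma equal_slope_forms (F : fieldType) (a b1 b2 k1 k2 m1 m2 : F) :
  a != 0 -> k1 != k2 ->
  m1 = k2 * (a * b2 - a * b1) / (a * (k1 - k2)) ->
  m2 = k1 * (a * b2 - a * b1) / (a * (k1 - k2)) ->
  m2 = m1 + b2 - b1 /\ k1 * m1 = k2 * m2.
Proof.
by move=> a_neq0 k_neq -> ->; split; field; rewrite subr_eq0 k_neq a_neq0.
Qed.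
Theorem theorem1p1 (a1 b1 a2 b2 : int) :
  let D : rat := (a1 * b2 - a2 * b1)%:~R in
  a1 * a2 * (a1 * b2 - a2 * b1) != 0 ->
  (* (i) *)
  (forall m1 m2 k1 k2 l : nat,
     (0 < m1)%N -> (0 < m2)%N -> (0 < k1)%N -> (0 < k2)%N -> (0 < l)%N ->
     k1 <> k2 ->
     (m1%:R : rat) = k2%:R * D / (a2%:~R * (k2%:R - k1%:R)) ->
     (m2%:R : rat) = k1%:R * D / (a1%:~R * (k2%:R - k1%:R)) ->
     (k1 * sigma m1 = k2 * sigma m2)%N ->
     let q1 := (k1 * l).-1 in let q2 := (k2 * l).-1 in
     prime q1 -> ~~ (q1 %| m1)%N -> prime q2 -> ~~ (q2 %| m2)%N ->
     let n : rat := ((m1 * q1)%:R - b1%:~R) / a1%:~R in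
     [/\ a1%:~R * n + b1%:~R = (m1 * q1)%:R,
         a2%:~R * n + b2%:~R = (m2 * q2)%:R
       & sigma (m1 * q1) = sigma (m2 * q2)]) /\
  (* (ii) *)
  (forall m1 m2 k1 k2 l : nat,
     (0 < m1)%N -> (0 < m2)%N -> (0 < k1)%N -> (0 < k2)%N -> (0 < l)%N ->
     k1 <> k2 ->
     (m1%:R : rat) = k2%:R * D / (a2%:~R * (k1%:R - k2%:R)) ->
     (m2%:R : rat) = k1%:R * D / (a1%:~R * (k1%:R - k2%:R)) ->
     (k1 * totient m1 = k2 * totient m2)%N ->
     let q1 := (k1 * l).+1 in let q2 := (k2 * l).+1 in
     prime q1 -> ~~ (q1 %| m1)%N -> prime q2 -> ~~ (q2 %| m2)%N ->
     let n : rat := ((m1 * q1)%:R - b1%:~R) / a1%:~R in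
     [/\ a1%:~R * n + b1%:~R = (m1 * q1)%:R,
         a2%:~R * n + b2%:~R = (m2 * q2)%:R
       & totient (m1 * q1) = totient (m2 * q2)]) /\
  (* (iii) *)
  (a1 = a2 ->
   forall m1 m2 k1 k2 : nat,
     (0 < m1)%N -> (0 < m2)%N -> (0 < k1)%N -> (0 < k2)%N ->
     k1 <> k2 ->
     (m1%:R : rat) = k2%:R * D / (a2%:~R * (k1%:R - k2%:R)) ->
     (m2%:R : rat) = k1%:R * D / (a1%:~R * (k1%:R - k2%:R)) ->
     (k1 * totient m1 = k2 * totient m2)%N ->
     m2%:Z = m1%:Z + b2 - b1 /\ primes m1 = primes m2).
Proof.
move=> D; rewrite !mulf_eq0 !negb_or => /andP[/andP[a1_neq0 a2_neq0] _].
have a1R_neq0 : a1%:~R != 0 :> rat by rewrite intr_eq0.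
have a2R_neq0 : a2%:~R != 0 :> rat by rewrite intr_eq0.
have DE : D = a1%:~R * b2%:~R - a2%:~R * b1%:~R by rewrite /D rmorphB /= !rmorphM.
have natr_neq (i j : nat) : i <> j -> i%:R != j%:R :> rat by rewrite eqr_nat => /eqP.
have first_form (m q : nat) :
    a1%:~R * (((m * q)%:R - b1%:~R) / a1%:~R) + b1%:~R = (m * q)%:R :> rat.
  by rewrite mulrCA mulfV // mulr1 subrK.
split; [|split].
- move=> m1 m2 k1 k2 l m1_gt0 m2_gt0 k1_gt0 k2_gt0 l_gt0 /natr_neq k_neq def_m1 def_m2 sigma_E.
  move=> q1 q2 q1_pr q1_ndvd q2_pr q2_ndvd n.
  have natr_q (k : nat) : (0 < k)%N -> (k * l).-1%:R = k%:R * l%:R - 1 :> rat.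
    by move=> k_gt0; rewrite -subn1 natrB ?muln_gt0 ?k_gt0 // natrM.
  rewrite -[_ - k1%:R]opprB -mulN1r DE in def_m1 def_m2.
  split; first exact: first_form.
    rewrite /n /q1 /q2 !natrM !natr_q //; apply: affine_forms_at_products => //.
  by apply: sigma_mul_pred_prime_eq; rewrite ?muln_gt0 ?k1_gt0 ?k2_gt0.
- move=> m1 m2 k1 k2 l _ _ _ _ _ /natr_neq k_neq def_m1 def_m2 totient_E.
  move=> q1 q2 q1_pr q1_ndvd q2_pr q2_ndvd n.
  rewrite -[_ - k2%:R]mul1r DE in def_m1 def_m2.
  split; first exact: first_form.
    rewrite /n /q1 /q2 !natrM -!natr1 !natrM; apply: affine_forms_at_products => //.
  exact: totient_mul_succ_prime_eq.
- move=> a_eq m1 m2 k1 k2 m1_gt0 m2_gt0 k1_gt0 k2_gt0 /natr_neq k_neq def_m1 def_m2 totient_E.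
  rewrite DE -a_eq in def_m1 def_m2.
  have [shift scaled] := equal_slope_forms a1R_neq0 k_neq def_m1 def_m2.
  split; first by apply: (@intr_inj rat); rewrite !rmorphB !rmorphD.
  apply: scaled_totient_eq_primes k1_gt0 k2_gt0 m1_gt0 m2_gt0 _ totient_E.
  by apply/eqP; rewrite -(eqr_nat rat) !natrM scaled.
Qed.
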